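(* Let $\theta>1$ be real with $\log\theta=p/q>1$ rational, where $p,q$ are positive integers. Then $\mathcal A_\theta\subseteq [1,\frac{p^2}{6q})$; in particular $\mathcal A_\theta$ is finite.
   Context: $\lfloor x\rfloor$ is the floor of $x$; $\log$ is the natural logarithm. For real $\theta>1$ and positive integer $n$, $M'_\theta(n)=\left\lfloor 1/(\theta^{1/n}-1)\right\rfloor$, and $\mathcal A_\theta=\{n\in\mathbb N: M'_\theta(n)\neq \lfloor n/\log\theta-1/2\rfloor\}$, where $\mathbb N$ is the set of positive integers. *)

From Stdlib Require Import Reals ZArith.
Open Scope R_scope.

(* floor of a real number: up x is the unique integer with x < up x <= x + 1,
   so up x - 1 is the greatest integer <= x. *)
Definition Rfloor (x : R) : Z := (up x - 1)%Z.

Definition Mprime (theta : R) (n : nat) : Z :=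
  Rfloor (1 / (Rpower theta (1 / INR n) - 1)).

Definition in_A (theta : R) (n : nat) : Prop :=
  (1 <= n)%nat /\ Mprime theta n <> Rfloor (INR n / ln theta - 1 / 2).

(* With x = ln theta / n we have theta^(1/n) = e^x and n / ln theta - 1/2 = 1/x - 1/2.
   The Padé approximants of orders (1,1) and (2,2) of e^x give
   1/x - 1/2 <= 1/(e^x - 1) < 1/x - 1/2 + x/12, so the two floors can only differ when
   an integer k lies in (1/x - 1/2, 1/x - 1/2 + x/12).  When ln theta = p/q, the number
   2p (k - (1/x - 1/2)) = 2kp - 2nq + p is a positive integer, so that interval must have
   length x/12 > 1/(2p), i.e. n < p^2/(6q). *)

From Stdlib Require Import Reals ZArith Lra Lia Psatz.
From Coquelicot Require Import Coquelicot.
Open Scope R_scope.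

Lemma exp_pade22_lt (x : R) : 0 < x ->
  x^2 + 6*x + 12 < exp x * (x^2 - 6*x + 12).
Proof.
  intros Hx.
  assert (Hnum : forall t, 0 <= t -> 0 < t^2 + 6*t + 12) by (intros; nra).
  assert (Hden : forall t, 0 < t^2 - 6*t + 12)
    by (intros t; assert (0 <= (t - 3)^2) by apply pow2_ge_0; nra).
  set (g := fun t => ln (t^2 + 6*t + 12) - ln (t^2 - 6*t + 12) - t).
  set (g' := fun t => - t^4 / ((t^2 + 6*t + 12) * (t^2 - 6*t + 12))).
  destruct (MVT_cor2 g g' 0 x Hx) as [c [Hgc Hc]].
  { intros c Hc. apply is_derive_Reals. unfold g, g'.
    pose proof (Hnum c ltac:(lra)). pose proof (Hden c).
    auto_derive; [repeat split; lra|]. field. lra. }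
  assert (Hg'c : g' c < 0).
  { unfold g'. pose proof (Hnum c ltac:(lra)). pose proof (Hden c).
    assert (0 < c^4) by (apply pow_lt; lra).
    assert (0 < c^4 / ((c^2 + 6*c + 12) * (c^2 - 6*c + 12)))
      by (apply Rdiv_lt_0_compat; nra).
    unfold Rdiv in *. lra. }
  assert (Hg0 : g 0 = 0) by (unfold g; replace (0^2 + 6*0 + 12) with (0^2 - 6*0 + 12) by ring; ring).
  assert (Hgx : ln ((x^2 + 6*x + 12) / (x^2 - 6*x + 12)) < x).
  { rewrite ln_div by (apply Hden || (apply Hnum; lra)). unfold g in Hg0, Hgc. nra. }
  pose proof (Hnum x (Rlt_le _ _ Hx)). pose proof (Hden x).
  apply exp_increasing in Hgx. rewrite exp_ln in Hgx by (apply Rdiv_lt_0_compat; auto).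
  apply (Rmult_lt_compat_r (x^2 - 6*x + 12)) in Hgx; auto.
  unfold Rdiv in Hgx. rewrite Rmult_assoc, Rinv_l, Rmult_1_r in Hgx; lra.
Qed.

Lemma exp_pade11_le (x : R) : 0 < x -> exp x * (2 - x) <= 2 + x.
Proof.
  intros Hx. destruct (Rle_or_lt 2 x) as [Hx2 | Hx2].
  { pose proof (exp_pos x). nra. }
  set (g := fun t => ln (2 + t) - ln (2 - t) - t).
  set (g' := fun t => t^2 / ((2 + t) * (2 - t))).
  destruct (MVT_cor2 g g' 0 x Hx) as [c [Hgc Hc]].
  { intros c Hc. apply is_derive_Reals. unfold g, g'.
    auto_derive; [repeat split; lra|]. field. lra. }
  assert (Hg'c : 0 < g' c) by (unfold g'; apply Rdiv_lt_0_compat; nra).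
  assert (Hg0 : g 0 = 0) by (unfold g; replace (2 - 0) with (2 + 0) by ring; ring).
  assert (Hgx : x < ln ((2 + x) / (2 - x))).
  { rewrite ln_div by lra. unfold g in Hg0, Hgc. nra. }
  apply exp_increasing in Hgx. rewrite exp_ln in Hgx by (apply Rdiv_lt_0_compat; lra).
  apply (Rmult_lt_compat_r (2 - x)) in Hgx; [|lra].
  unfold Rdiv in Hgx. rewrite Rmult_assoc, Rinv_l, Rmult_1_r in Hgx; lra.
Qed.

Lemma exp_gt_1 (x : R) : 0 < x -> 1 < exp x.
Proof. intros Hx. rewrite <- exp_0. now apply exp_increasing. Qed.

Lemma inv_expm1_ge (x : R) : 0 < x -> 1/x - 1/2 <= 1 / (exp x - 1).
Proof.
  intros Hx. pose proof (exp_gt_1 x Hx). pose proof (exp_pade11_le x Hx).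
  assert (Hd : 1 / (exp x - 1) - (1/x - 1/2)
               = (2 + x - exp x * (2 - x)) * / (2 * x * (exp x - 1))) by (field; lra).
  assert (0 <= (2 + x - exp x * (2 - x)) * / (2 * x * (exp x - 1)))
    by (apply Rle_mult_inv_pos; nra).
  lra.
Qed.

Lemma inv_expm1_lt (x : R) : 0 < x -> 1 / (exp x - 1) < 1/x - 1/2 + x/12.
Proof.
  intros Hx. pose proof (exp_gt_1 x Hx). pose proof (exp_pade22_lt x Hx).
  assert (Hd : 1/x - 1/2 + x/12 - 1 / (exp x - 1)
               = (exp x * (x^2 - 6*x + 12) - (x^2 + 6*x + 12)) / (12 * x * (exp x - 1)))
    by (field; lra).
  assert (0 < (exp x * (x^2 - 6*x + 12) - (x^2 + 6*x + 12)) / (12 * x * (exp x - 1)))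
    by (apply Rdiv_lt_0_compat; nra).
  lra.
Qed.

Lemma Mprime_exp (theta : R) (n : nat) :
  Mprime theta n = Rfloor (1 / (exp (ln theta / INR n) - 1)).
Proof. unfold Mprime, Rpower. do 4 f_equal. unfold Rdiv. ring. Qed.

Lemma up_le_of_Rfloor_neq (a b : R) :
  b <= a -> Rfloor a <> Rfloor b -> IZR (up b) <= a.
Proof.
  intros Hba Hne. destruct (Rle_or_lt (IZR (up b)) a) as [Hle | Hlt]; [exact Hle|].
  exfalso. apply Hne. unfold Rfloor. f_equal. symmetry.
  destruct (archimed b). apply tech_up; lra.
Qed.

Lemma in_A_integer_between (theta : R) (n : nat) : 1 < theta -> in_A theta n ->
  exists k : Z, INR n / ln theta - 1/2 < IZR k
                /\ IZR k < INR n / ln theta - 1/2 + ln theta / (12 * INR n).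
Proof.
  intros Htheta [Hn Hne].
  assert (HN : 0 < INR n) by (apply lt_0_INR; lia).
  assert (HL : 0 < ln theta) by (rewrite <- ln_1; apply ln_increasing; lra).
  set (x := ln theta / INR n).
  assert (Hx : 0 < x) by (apply Rdiv_lt_0_compat; auto).
  assert (Hb : INR n / ln theta - 1/2 = 1/x - 1/2) by (unfold x; field; lra).
  rewrite Mprime_exp in Hne. fold x in Hne. rewrite Hb in Hne |- *.
  pose proof (inv_expm1_ge x Hx) as Hlow.
  pose proof (inv_expm1_lt x Hx) as Hupp.
  exists (up (1/x - 1/2)). split.
  - apply archimed.
  - pose proof (up_le_of_Rfloor_neq _ _ Hlow Hne).
    replace (ln theta / (12 * INR n)) with (x / 12) by (unfold x; field; lra). lra.
Qed.

Lemma half_grid_gap (k : Z) (n p q : nat) : (0 < p)%nat -> (0 < q)%nat ->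
  INR n / (INR p / INR q) - 1/2 < IZR k ->
  1 / (2 * INR p) <= IZR k - (INR n / (INR p / INR q) - 1/2).
Proof.
  intros Hp Hq Hk.
  assert (HP : 0 < INR p) by (apply lt_0_INR; lia).
  assert (HQ : 0 < INR q) by (apply lt_0_INR; lia).
  set (m := (2 * k * Z.of_nat p - 2 * Z.of_nat n * Z.of_nat q + Z.of_nat p)%Z).
  assert (Hm : IZR m = 2 * INR p * (IZR k - (INR n / (INR p / INR q) - 1/2))).
  { unfold m. rewrite plus_IZR, minus_IZR, !mult_IZR, <- !INR_IZR_INZ. field. lra. }
  assert (Hm0 : (0 < m)%Z) by (apply lt_0_IZR; rewrite Hm; nra).
  assert (Hm1 : 1 <= IZR m) by (apply IZR_le; lia).
  apply (Rmult_le_reg_l (2 * INR p)); [lra|].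
  replace (2 * INR p * (1 / (2 * INR p))) with 1 by (field; lra). lra.
Qed.

Theorem theorem2 (theta : R) (p q : nat) :
  1 < theta ->
  (0 < p)%nat -> (0 < q)%nat ->
  ln theta = INR p / INR q ->
  1 < ln theta ->
  (forall n : nat, in_A theta n ->
     1 <= INR n /\ INR n < INR p ^ 2 / (6 * INR q))
  /\ (exists N : nat, forall n : nat, in_A theta n -> (n < N)%nat).
Proof.
  intros Htheta Hp Hq HL _.
  assert (HP : 0 < INR p) by (apply lt_0_INR; lia).
  assert (HQ : 1 <= INR q) by (apply (le_INR 1); lia).
  assert (Hbound : forall n, in_A theta n -> 1 <= INR n /\ INR n < INR p ^ 2 / (6 * INR q)).
  { intros n Hn.
    assert (HN : 1 <= INR n) by (apply (le_INR 1); apply Hn).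
    split; [exact HN|].
    destruct (in_A_integer_between theta n Htheta Hn) as [k [Hlo Hhi]].
    rewrite HL in Hlo, Hhi.
    pose proof (half_grid_gap k n p q Hp Hq Hlo).
    assert (Hd : INR p ^ 2 / (6 * INR q) - INR n
                 = (INR p / INR q / (12 * INR n) - 1 / (2 * INR p)) * (2 * INR p * INR n))
      by (field; lra).
    assert (0 < (INR p / INR q / (12 * INR n) - 1 / (2 * INR p)) * (2 * INR p * INR n))
      by (apply Rmult_lt_0_compat; nra).
    lra. }
  split; [exact Hbound|].
  exists (p * p)%nat. intros n Hn. apply INR_lt. rewrite mult_INR.
  destruct (Hbound n Hn) as [_ Hn_lt].
  assert (Hd : INR p ^ 2 - INR p ^ 2 / (6 * INR q) = INR p ^ 2 * (6 * INR q - 1) * / (6 * INR q))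
    by (field; lra).
  assert (0 <= INR p ^ 2 * (6 * INR q - 1) * / (6 * INR q)) by (apply Rle_mult_inv_pos; nra).
  nra.
Qed.
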